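(* (a) If $\Lambda$ is a boundary lamination, then no point $p\in S^1$ is contained in more than two leaves of $\Lambda$. (b) Conversely, suppose $\Lambda$ is a lamination such that no point $p\in S^1$ is contained in more than two leaves of $\Lambda$, and $\Lambda$ has no isolated leaves. Let $\mathcal{L}:=\mathrm{Rel}(\Lambda)$. Then $\mathrm{Lam}(\mathcal{L})=\Lambda$; in particular $\Lambda$ is a boundary lamination.
   Context: A lamination is a closed subset of the space of unordered pairs of distinct points of $S^1$ such that no two elements (leaves) are linked in $S^1$. Leaves are also viewed as geodesics in $\mathbb{H}^2$ with $S^1=\partial\mathbb{H}^2$; a leaf is isolated if it is not a limit of other leaves on either side. A laminar relation is an equivalence relation on $S^1$ with closed classes, closed in the space of unordered distinct pairs, with distinct classes unlinked. For a laminar relation $\mathcal{L}$, $\mathrm{Lam}(\mathcal{L})$ is the lamination consisting, for each nontrivial class $\nu$, of the pair $\nu$ if $|\nu|=2$ and of the endpoint pairs of the sides of the hyperbolic convex hull of $\nu$ if $|\nu|>2$; a lamination of this form is a boundary lamination. For a lamination $\Lambda$, $\mathrm{Rel}(\Lambda)$ is the smallest closed equivalence relation (as a set of unordered pairs) containing $\Lambda$ and containing every unordered pair that crosses only countably many leaves of $\Lambda$. *)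

From Stdlib Require Import Reals.
Open Scope R_scope.

(** The circle S^1 = R/Z, represented by the points t with 0 <= t < 1. *)
Definition S1 : Type := { t : R | 0 <= t < 1 }.
Definition pt (p : S1) : R := proj1_sig p.

Definition cdist (p q : S1) : R :=
  Rmin (Rabs (pt p - pt q)) (1 - Rabs (pt p - pt q)).

(** For a <> b, S^1 \ {a,b} has two components (open arcs):
    [arc_in a b] (between the representatives) and [arc_out a b]. *)
Definition arc_in (a b x : S1) : Prop :=
  Rmin (pt a) (pt b) < pt x < Rmax (pt a) (pt b).
Definition arc_out (a b x : S1) : Prop :=
  pt x < Rmin (pt a) (pt b) \/ Rmax (pt a) (pt b) < pt x.

Definition linked (a b c d : S1) : Prop :=
  a <> b /\ c <> d /\
  ((arc_in a b c /\ arc_out a b d) \/ (arc_out a b c /\ arc_in a b d)).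

(** Sets of unordered pairs of distinct points are encoded as symmetric
    irreflexive relations. *)
Definition upair_set (A : S1 -> S1 -> Prop) : Prop :=
  (forall p q, A p q -> p <> q) /\ (forall p q, A p q -> A q p).

(** Closedness of {(p,q) | p <> q, A p q} in the space of (unordered) pairs of
    distinct points: its complement there is open. *)
Definition closed_pairs (A : S1 -> S1 -> Prop) : Prop :=
  forall p q, p <> q -> ~ A p q ->
    exists eps, 0 < eps /\
      forall p' q', cdist p p' < eps -> cdist q q' < eps -> ~ A p' q'.

Definition closed_set (X : S1 -> Prop) : Prop :=
  forall p, ~ X p -> exists eps, 0 < eps /\ forall p', cdist p p' < eps -> ~ X p'.

Definition lamination (La : S1 -> S1 -> Prop) : Prop :=
  upair_set La /\ closed_pairs La /\
  (forall a b c d, La a b -> La c d -> ~ linked a b c d).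

Definition same_upair (a b c d : S1) : Prop := (a = c /\ b = d) \/ (a = d /\ b = c).

Definition upair_near (eps : R) (a b c d : S1) : Prop :=
  (cdist a c < eps /\ cdist b d < eps) \/ (cdist a d < eps /\ cdist b c < eps).

Definition isolated_leaf (La : S1 -> S1 -> Prop) (a b : S1) : Prop :=
  La a b /\ exists eps, 0 < eps /\
    forall c d, La c d -> upair_near eps a b c d -> same_upair a b c d.

Definition no_isolated_leaves (La : S1 -> S1 -> Prop) : Prop :=
  forall a b, La a b -> ~ isolated_leaf La a b.

Definition at_most_two_leaves_at_each_point (La : S1 -> S1 -> Prop) : Prop :=
  forall p q1 q2 q3, La p q1 -> La p q2 -> La p q3 ->
    q1 = q2 \/ q1 = q3 \/ q2 = q3.

Definition equivalence_rel (E : S1 -> S1 -> Prop) : Prop :=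
  (forall x, E x x) /\ (forall x y, E x y -> E y x) /\
  (forall x y z, E x y -> E y z -> E x z).

Definition laminar_relation (L : S1 -> S1 -> Prop) : Prop :=
  equivalence_rel L /\
  (forall x, closed_set (L x)) /\
  closed_pairs L /\
  (forall a b c d, L a b -> L c d -> ~ L a c -> ~ linked a b c d).

Definition two_point_class (L : S1 -> S1 -> Prop) (a b : S1) : Prop :=
  a <> b /\ L a b /\ forall x, L a x -> x = a \/ x = b.

(** For a closed set nu in S^1 with more than two points, {a,b} (a,b in nu,
    a <> b) is the pair of endpoints of a side of the hyperbolic convex hull of
    nu iff one of the two open arcs of S^1 \ {a,b} misses nu. *)
Definition hull_side (nu : S1 -> Prop) (a b : S1) : Prop :=
  nu a /\ nu b /\ a <> b /\
  ((forall x, nu x -> ~ arc_in a b x) \/ (forall x, nu x -> ~ arc_out a b x)).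

Definition Lam (L : S1 -> S1 -> Prop) (a b : S1) : Prop :=
  two_point_class L a b \/
  (~ two_point_class L a b /\ (exists x y, L a x /\ L a y /\ x <> y /\ x <> a /\ y <> a)
   /\ hull_side (L a) a b).

Definition boundary_lamination (La : S1 -> S1 -> Prop) : Prop :=
  exists L, laminar_relation L /\ forall a b, La a b <-> Lam L a b.

Definition countable_set {X : Type} (P : X -> Prop) : Prop :=
  exists f : X -> nat, forall x y, P x -> P y -> f x = f y -> x = y.

(** The (ordered encodings of the) leaves of La crossed by {a,b}. *)
Definition crossed_leaves (La : S1 -> S1 -> Prop) (a b : S1) (cd : S1 * S1) : Prop :=
  La (fst cd) (snd cd) /\ linked a b (fst cd) (snd cd).

Definition closed_equivalence (E : S1 -> S1 -> Prop) : Prop :=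
  equivalence_rel E /\ closed_pairs E.

(** Rel(La): the smallest closed equivalence relation containing La and every
    pair {a,b} crossing only countably many leaves of La (the intersection of
    all such relations). *)
Definition Rel (La : S1 -> S1 -> Prop) (p q : S1) : Prop :=
  forall E, closed_equivalence E ->
    (forall a b, La a b -> E a b) ->
    (forall a b, a <> b -> countable_set (crossed_leaves La a b) -> E a b) ->
    E p q.

From Pilot Require Import Defs.
From Stdlib Require Import Reals Lra Classical ProofIrrelevance ClassicalEpsilon
  FunctionalExtensionality PropExtensionality.
Open Scope R_scope.

(* (a) A leaf of Lam L through p is either the whole two-point class of p or a side of the hull
   of that class; such a side joins p to the first or to the last point of the class met
   counter-clockwise from p, so three leaves at p would make two of them coincide.

   (b) Call a ~ b when a = b or the chord a b crosses no leaf.  Transitivity of ~ is where the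
   hypotheses enter: a leaf crossing a c but neither a b nor b c must end at b, and since it is
   not isolated the nearby leaves end at b as well, giving three leaves at b.  Crossing is an
   open condition, so ~ is closed, and its classes are unlinked.  A chord crossing some leaf
   crosses uncountably many: the leaves crossing it form a closed set without isolated points,
   and nested boxes of leaves avoiding the n-th leaf at step n converge to a leaf missed by any
   enumeration.  Hence Rel La is ~.  Finally every leaf a b is a hull side of the class of a
   (a nearby leaf would cross a chord of the class), and a hull side a b is a leaf, being the
   limit of the nested leaves separating the arc between a and b from a. *)

Lemma pt_inj (x y : S1) : pt x = pt y -> x = y.
Proof.
  destruct x as [x Hx], y as [y Hy]; unfold pt; simpl; intros ->.
  f_equal; apply proof_irrelevance.
Qed.

Lemma pt_bounds (x : S1) : 0 <= pt x < 1.
Proof. exact (proj2_sig x). Qed.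

(* Counter-clockwise arc length from [o] to [x]; the circle cut open at [o]. *)
Definition ccw (o x : S1) : R :=
  if Rle_dec (pt o) (pt x) then pt x - pt o else pt x - pt o + 1.

Ltac add_bounds :=
  repeat match goal with
  | x : S1 |- _ =>
     lazymatch goal with
     | H : 0 <= pt x < 1 |- _ => fail
     | _ => pose proof (pt_bounds x)
     end
  end.

Ltac split_ifs :=
  repeat match goal with
  | |- context [Rle_dec ?x ?y] => destruct (Rle_dec x y)
  | H : context [Rle_dec ?x ?y] |- _ => destruct (Rle_dec x y)
  | |- context [Rcase_abs ?x] => destruct (Rcase_abs x)
  | H : context [Rcase_abs ?x] |- _ => destruct (Rcase_abs x)
  end.

Ltac split_points :=
  repeat match goal with
  | H : _ /\ _ |- _ => destruct H
  | H : _ \/ _ |- _ => destruct H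
  | H : @eq S1 _ _ |- _ => subst
  | H : ~ (@eq S1 ?x ?y) |- _ =>
      let E := fresh in
      assert (E : pt x < pt y \/ pt y < pt x)
        by (destruct (Rtotal_order (pt x) (pt y)) as [?|[?|?]];
            [left; auto | exfalso; apply H, pt_inj; auto | right; auto]);
      clear H
  end.

Ltac solve_linear :=
  match goal with
  | |- _ /\ _ => split; solve_linear
  | |- _ \/ _ => (left; solve_linear) || (right; solve_linear)
  | |- ~ (@eq S1 _ _) => let E := fresh in intro E; subst; lra
  | |- @eq S1 _ _ => apply pt_inj; lra
  | |- ~ _ => intro; split_points; lra
  | |- _ => lra
  end.

Ltac order_points :=
  solve_linear || (exfalso; lra) ||
  match goal with x : S1, y : S1 |- _ =>
    assert_fails (assert (pt x < pt y) by lra);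
    assert_fails (assert (pt y <= pt x) by lra);
    destruct (Rlt_or_le (pt x) (pt y)); order_points end.

(* Decides a statement about finitely many points of the circle by unfolding it to their
   coordinates in [0, 1) and splitting on the relative order of these coordinates. *)
Ltac circle_arith :=
  intros; add_bounds;
  unfold linked, arc_in, arc_out, ccw, cdist, Rmin, Rmax, Rabs in *;
  split_points; split_ifs; split_points; order_points.

Lemma linked_iff_ccw (a b x y : S1) : linked a b x y <->
  (0 < ccw a x < ccw a b /\ ccw a b < ccw a y) \/ (0 < ccw a y < ccw a b /\ ccw a b < ccw a x).
Proof. split; circle_arith. Qed.

Lemma linked_sym_l (a b x y : S1) : linked a b x y -> linked b a x y.
Proof. circle_arith. Qed.

Lemma linked_sym_r (a b x y : S1) : linked a b x y -> linked a b y x.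
Proof. circle_arith. Qed.

Lemma linked_comm (a b x y : S1) : linked a b x y -> linked x y a b.
Proof. circle_arith. Qed.

Lemma linked_split_chord (a b c x y : S1) :
  linked a c x y -> b <> x -> b <> y -> b <> a -> b <> c ->
  linked a b x y \/ linked b c x y.
Proof. circle_arith. Qed.

Lemma linked_split_diagonal (a b c d x y : S1) :
  linked a b c d -> linked a c x y -> linked a b x y \/ linked c d x y.
Proof. circle_arith. Qed.

Lemma linked_of_arcs (a b z w : S1) : arc_in a b z -> arc_out a b w -> linked a b z w.
Proof. circle_arith. Qed.

Lemma arc_in_l (a b : S1) : ~ arc_in a b a.
Proof. circle_arith. Qed.

Lemma arc_in_r (a b : S1) : ~ arc_in a b b.
Proof. circle_arith. Qed.

Lemma ccw_bounds (o x : S1) : 0 <= ccw o x < 1.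
Proof. circle_arith. Qed.

Lemma ccw_self (o : S1) : ccw o o = 0.
Proof. circle_arith. Qed.

Lemma ccw_pos (o x : S1) : x <> o -> 0 < ccw o x.
Proof. circle_arith. Qed.

Lemma ccw_inj (o x y : S1) : ccw o x = ccw o y -> x = y.
Proof. circle_arith. Qed.

Lemma ccw_flip (a b x : S1) : a <> b -> (ccw a b < ccw a x <-> 0 < ccw b x < ccw b a).
Proof. split; circle_arith. Qed.

Lemma ccw_surj (o : S1) (t : R) : 0 <= t < 1 -> exists x, ccw o x = t.
Proof.
  intros Ht. pose proof (pt_bounds o).
  destruct (Rlt_or_le (pt o + t) 1).
  - assert (Hb : 0 <= pt o + t < 1) by lra.
    exists (exist _ (pt o + t) Hb). unfold ccw, pt at 2 3; simpl. fold (pt o).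
    destruct Rle_dec; lra.
  - assert (Hb : 0 <= pt o + t - 1 < 1) by lra.
    exists (exist _ (pt o + t - 1) Hb). unfold ccw, pt at 2 3; simpl. fold (pt o).
    destruct Rle_dec; lra.
Qed.

Lemma linked_of_ccw_between (o p q x y : S1) :
  ccw o p < ccw o x < ccw o q -> (ccw o y < ccw o p \/ ccw o q < ccw o y) -> linked p q x y.
Proof. circle_arith. Qed.

Lemma arcs_ccw (a b : S1) : a <> b ->
  ((forall x, arc_in a b x <-> 0 < ccw a x < ccw a b) /\
   (forall x, arc_out a b x <-> ccw a b < ccw a x)) \/
  ((forall x, arc_in a b x <-> ccw a b < ccw a x) /\
   (forall x, arc_out a b x <-> 0 < ccw a x < ccw a b)).
Proof.
  intros Hab. destruct (Rlt_or_le (pt a) (pt b)).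
  - left; split; intro x; split; circle_arith.
  - right; split; intro x; split; circle_arith.
Qed.

Lemma cdist_self (x : S1) : cdist x x = 0.
Proof. circle_arith. Qed.

Lemma cdist_le_ccw (o x y : S1) : cdist x y <= Rabs (ccw o x - ccw o y).
Proof. circle_arith. Qed.

Lemma cdist_lt_ccw (o x y : S1) (eps : R) :
  cdist x y < eps -> eps <= ccw o x <= 1 - eps -> Rabs (ccw o x - ccw o y) < eps.
Proof. circle_arith. Qed.

Lemma cdist_lt_ccw_base (o p : S1) (eps : R) :
  cdist o p < eps -> ccw o p < eps \/ 1 - eps < ccw o p.
Proof. circle_arith. Qed.

Lemma pos_below4 (a b c d : R) : 0 < a -> 0 < b -> 0 < c -> 0 < d ->
  exists e, 0 < e /\ e <= a /\ e <= b /\ e <= c /\ e <= d.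
Proof.
  intros. exists (Rmin (Rmin a b) (Rmin c d)).
  unfold Rmin; split_ifs; repeat split; lra.
Qed.

Lemma pow_half_lt (r eps : R) : 0 < eps -> exists N : nat, r * (1/2) ^ N < eps.
Proof.
  intros He. destruct (Rle_lt_dec r 0).
  - exists 0%nat. simpl. lra.
  - destruct (pow_lt_1_zero (1/2) ltac:(rewrite Rabs_pos_eq; lra) (eps / r)
                ltac:(apply Rdiv_lt_0_compat; lra)) as [N HN].
    exists N. specialize (HN N (le_n _)).
    rewrite Rabs_pos_eq in HN by (apply pow_le; lra).
    apply Rmult_lt_compat_l with (r := r) in HN; auto.
    replace (r * (eps / r)) with eps in HN by (field; lra). lra.
Qed.

Lemma nested_balls_limit (X rad : nat -> R) :
  (forall n, 0 <= rad n) ->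
  (forall n, Rabs (X (S n) - X n) + rad (S n) <= rad n) ->
  exists l, forall n, Rabs (l - X n) <= rad n.
Proof.
  intros Hpos Hstep.
  assert (Hnest : forall m n, (m <= n)%nat ->
            X m - rad m <= X n - rad n /\ X n + rad n <= X m + rad m).
  { intros m n Hmn. induction Hmn as [|n _ IH]; [lra|].
    specialize (Hstep n). revert Hstep; unfold Rabs; split_ifs; lra. }
  assert (Hbnd : forall m n, X m - rad m <= X n + rad n).
  { intros m n. pose proof (Hpos m); pose proof (Hpos n).
    destruct (Nat.le_ge_cases m n) as [Hmn|Hmn]; apply Hnest in Hmn; lra. }
  destruct (completeness (fun t => exists n, t = X n - rad n)) as [l [Hub Hlub]].
  { exists (X 0%nat + rad 0%nat). intros t [n ->]. apply Hbnd. }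
  { exists (X 0%nat - rad 0%nat); eauto. }
  exists l. intro n.
  assert (X n - rad n <= l) by (apply Hub; eauto).
  assert (l <= X n + rad n) by (apply Hlub; intros t [m ->]; apply Hbnd).
  unfold Rabs; split_ifs; lra.
Qed.

Lemma nested_intervals_hull (I : R -> R -> Prop) (lo hi : R) :
  (exists c e, I c e) ->
  (forall c e, I c e -> lo <= c /\ e <= hi) ->
  (forall c1 e1 c2 e2, I c1 e1 -> I c2 e2 -> c1 < c2 -> e2 <= e1) ->
  exists cs es, lo <= cs /\ es <= hi /\
    (forall c e, I c e -> cs <= c /\ e <= es) /\
    (forall eps, 0 < eps -> exists c e, I c e /\ c < cs + eps /\ es - eps < e).
Proof.
  intros [c0 [e0 I0]] Hbnd Hnest.
  destruct (completeness (fun t => exists c e, I c e /\ t = - c)) as [mc [Hmc1 Hmc2]].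
  { exists (- lo). intros t [c [e [H ->]]]. apply Hbnd in H. lra. }
  { exists (- c0); eauto. }
  destruct (completeness (fun t => exists c e, I c e /\ t = e)) as [es [Hes1 Hes2]].
  { exists hi. intros t [c [e [H ->]]]. apply Hbnd in H. lra. }
  { exists e0; eauto. }
  assert (Hin : forall c e, I c e -> - mc <= c /\ e <= es).
  { intros c e H. split; [assert (- c <= mc) by (apply Hmc1; eauto); lra | apply Hes1; eauto]. }
  exists (- mc), es. split; [|split; [|split; [exact Hin|]]].
  - assert (mc <= - lo); [|lra]. apply Hmc2. intros t [c [e [H ->]]]. apply Hbnd in H. lra.
  - apply Hes2. intros t [c [e [H ->]]]. apply Hbnd in H. lra.
  - intros eps He.
    assert (E1 : exists c e, I c e /\ - c > mc - eps).
    { apply NNPP; intro N. assert (mc <= mc - eps); [|lra]. apply Hmc2.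
      intros t [c [e [H ->]]]. apply Rnot_lt_le; intro. apply N; exists c, e; split; auto; lra. }
    assert (E2 : exists c e, I c e /\ e > es - eps).
    { apply NNPP; intro N. assert (es <= es - eps); [|lra]. apply Hes2.
      intros t [c [e [H ->]]]. apply Rnot_lt_le; intro. apply N; exists c, e; split; auto; lra. }
    destruct E1 as [c1 [e1 [I1 H1]]], E2 as [c2 [e2 [I2 H2]]].
    destruct (Rlt_or_le c1 c2) as [Hlt|Hle].
    + pose proof (Hnest _ _ _ _ I1 I2 Hlt). exists c1, e1; split; auto; lra.
    + exists c2, e2; split; auto; lra.
Qed.

Lemma dependent_choice_nat {A : Type} (P : A -> Prop) (Q : nat -> A -> A -> Prop) (a0 : A) :
  P a0 -> (forall n a, P a -> exists a', P a' /\ Q n a a') ->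
  exists f : nat -> A, forall n, P (f n) /\ Q n (f n) (f (S n)).
Proof.
  intros H0 Hstep.
  assert (Htot : forall n a, exists a', P a -> P a' /\ Q n a a').
  { intros n a. destruct (classic (P a)) as [Ha|Ha].
    - destruct (Hstep n a Ha) as [a' Ha']. eauto.
    - exists a; contradiction. }
  set (F n a := proj1_sig (constructive_indefinite_description _ (Htot n a))).
  assert (HF : forall n a, P a -> P (F n a) /\ Q n a (F n a))
    by (intros n a; exact (proj2_sig (constructive_indefinite_description _ (Htot n a)))).
  set (f := fix f n := match n with O => a0 | S k => F k (f k) end).
  assert (Hf : forall n, P (f n)).
  { intro n; induction n as [|n IH]; [exact H0 | apply HF, IH]. }
  exists f. intro n. split; [apply Hf | apply HF, Hf].
Qed.

Lemma closed_pairs_limit (A : S1 -> S1 -> Prop) (o p q : S1) :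
  closed_pairs A -> p <> q ->
  (forall eps, 0 < eps -> exists c e,
     A c e /\ Rabs (ccw o c - ccw o p) < eps /\ Rabs (ccw o e - ccw o q) < eps) ->
  A p q.
Proof.
  intros Hcl Hpq Happ. apply NNPP; intro N.
  destruct (Hcl p q Hpq N) as [eps [He Hfar]].
  destruct (Happ eps He) as [c [e [Ace [Hc He']]]].
  apply (Hfar c e); auto; eapply Rle_lt_trans; try apply (cdist_le_ccw o);
    rewrite Rabs_minus_sym; assumption.
Qed.

Lemma linked_open (p q c d : S1) : linked p q c d ->
  exists eps, 0 < eps /\
    forall p' q', cdist p p' < eps -> cdist q q' < eps -> linked p' q' c d.
Proof.
  intros Hl.
  pose proof (linked_comm _ _ _ _ Hl) as Hs. apply linked_iff_ccw in Hs.
  pose proof (ccw_bounds c p); pose proof (ccw_bounds c q); pose proof (ccw_bounds c d).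
  assert (Hd : exists e, 0 < e /\ e <= ccw c p <= 1 - e /\ e <= ccw c q <= 1 - e /\
     e <= Rabs (ccw c p - ccw c d) /\ e <= Rabs (ccw c q - ccw c d)).
  { destruct (pos_below4 (ccw c p) (1 - ccw c p) (ccw c q) (1 - ccw c q))
      as [d1 [? [? [? [? ?]]]]]; try lra.
    destruct Hs as [[[? ?] ?]|[[? ?] ?]].
    - destruct (pos_below4 d1 (ccw c d - ccw c p) (ccw c q - ccw c d) 1)
        as [e [? [? [? [? ?]]]]]; try lra.
      exists e; unfold Rabs; repeat split; try lra; destruct Rcase_abs; lra.
    - destruct (pos_below4 d1 (ccw c p - ccw c d) (ccw c d - ccw c q) 1)
        as [e [? [? [? [? ?]]]]]; try lra.
      exists e; unfold Rabs; repeat split; try lra; destruct Rcase_abs; lra. }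
  destruct Hd as [e [He [Hp [Hq [Hpd Hqd]]]]].
  exists e; split; auto. intros p' q' Hp' Hq'.
  pose proof (cdist_lt_ccw c p p' e Hp' Hp).
  pose proof (cdist_lt_ccw c q q' e Hq' Hq).
  apply linked_comm, linked_iff_ccw.
  revert Hs H2 H3 Hpd Hqd. unfold Rabs; split_ifs; lra.
Qed.

Lemma exists_radius_avoiding (P : S1 -> S1 -> Prop) (o u v : S1) (r : R) :
  (forall c d c' d', P c d -> P c' d' -> c = c' /\ d = d') -> ~ P u v -> 0 < r ->
  exists r', 0 < r' <= r /\
    forall c d, P c d -> ~ (Rabs (ccw o c - ccw o u) <= r' /\ Rabs (ccw o d - ccw o v) <= r').
Proof.
  intros Huniq Huv Hr.
  destruct (classic (exists c d, P c d)) as [[c [d Pcd]]|Hno].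
  2:{ exists r; split; [lra|]. intros c d Pcd. exfalso; eauto. }
  assert (Hgap : 0 < Rabs (ccw o c - ccw o u) \/ 0 < Rabs (ccw o d - ccw o v)).
  { destruct (classic (ccw o c = ccw o u)) as [E1|E1];
      [destruct (classic (ccw o d = ccw o v)) as [E2|E2]|].
    - apply ccw_inj in E1; apply ccw_inj in E2; subst; contradiction.
    - right; apply Rabs_pos_lt; lra.
    - left; apply Rabs_pos_lt; lra. }
  set (m := Rmax (Rabs (ccw o c - ccw o u)) (Rabs (ccw o d - ccw o v))).
  assert (Hm : 0 < m) by (unfold m, Rmax; destruct Rle_dec; destruct Hgap; lra).
  exists (Rmin r (m / 2)). split.
  - pose proof (Rmin_l r (m / 2)). split; [unfold Rmin; destruct Rle_dec | ]; lra.
  - intros c' d' Pcd' [Hc Hd]. destruct (Huniq _ _ _ _ Pcd Pcd') as [<- <-].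
    pose proof (Rmin_r r (m / 2)) as Hmin. revert Hc Hd Hm Hmin. unfold m, Rmax.
    destruct Rle_dec; lra.
Qed.

Definition uncrossed (La : S1 -> S1 -> Prop) (a b : S1) : Prop :=
  forall x y, La x y -> ~ linked a b x y.

Definition uncrossed_rel (La : S1 -> S1 -> Prop) (a b : S1) : Prop :=
  a = b \/ uncrossed La a b.

Lemma uncrossed_sym (La : S1 -> S1 -> Prop) (a b : S1) : uncrossed La a b -> uncrossed La b a.
Proof. intros H x y Hxy Hl. apply (H x y Hxy), linked_sym_l, Hl. Qed.

Lemma uncrossed_rel_refl (La : S1 -> S1 -> Prop) (a : S1) : uncrossed_rel La a a.
Proof. left; reflexivity. Qed.

Lemma uncrossed_rel_sym (La : S1 -> S1 -> Prop) (a b : S1) :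
  uncrossed_rel La a b -> uncrossed_rel La b a.
Proof. intros [->|H]; [left | right; apply uncrossed_sym]; auto. Qed.

Lemma uncrossed_of_rel (La : S1 -> S1 -> Prop) (a b : S1) :
  uncrossed_rel La a b -> a <> b -> uncrossed La a b.
Proof. intros [H|H] N; [contradiction | exact H]. Qed.

Lemma crossing_of_not_uncrossed_rel (La : S1 -> S1 -> Prop) (a b : S1) :
  ~ uncrossed_rel La a b -> exists x y, La x y /\ linked a b x y.
Proof.
  intros H. apply NNPP; intro H'. apply H; right.
  intros x y Hxy Hl. apply H'; eauto.
Qed.

Lemma uncrossed_rel_closed_pairs (La : S1 -> S1 -> Prop) : closed_pairs (uncrossed_rel La).
Proof.
  intros p q Hpq HE. destruct (crossing_of_not_uncrossed_rel _ _ _ HE) as [x [y [Hxy Hl]]].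
  destruct (linked_open _ _ _ _ Hl) as [e [He Hnear]].
  exists e; split; auto. intros p' q' H1 H2 [E|E].
  - subst. destruct (Hnear _ _ H1 H2) as [N _]; auto.
  - exact (E x y Hxy (Hnear _ _ H1 H2)).
Qed.

Lemma uncrossed_rel_closed_class (La : S1 -> S1 -> Prop) (x : S1) :
  Defs.closed_set (uncrossed_rel La x).
Proof.
  intros p HE. destruct (crossing_of_not_uncrossed_rel _ _ _ HE) as [c [d [Hcd Hl]]].
  destruct (linked_open _ _ _ _ Hl) as [e [He Hnear]].
  assert (Hx : cdist x x < e) by (rewrite cdist_self; exact He).
  exists e; split; auto. intros p' H1 [E|E].
  - subst. destruct (Hnear _ _ Hx H1) as [N _]; auto.
  - exact (E c d Hcd (Hnear _ _ Hx H1)).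
Qed.

(* A leaf crossing [a c] would cross [a b] or [c d]. *)
Lemma uncrossed_rel_unlinked (La : S1 -> S1 -> Prop) (a b c d : S1) :
  uncrossed_rel La a b -> uncrossed_rel La c d -> ~ uncrossed_rel La a c -> ~ linked a b c d.
Proof.
  intros Hab Hcd Hac Hl.
  destruct (crossing_of_not_uncrossed_rel _ _ _ Hac) as [x [y [Hxy Hl2]]].
  destruct Hab as [E|Hab]; [subst; destruct Hl as [N _]; auto|].
  destruct Hcd as [E|Hcd]; [subst; destruct Hl as [_ [N _]]; auto|].
  destruct (linked_split_diagonal a b c d x y Hl Hl2) as [H|H];
    [exact (Hab x y Hxy H) | exact (Hcd x y Hxy H)].
Qed.

Section Lamination.

Variable La : S1 -> S1 -> Prop.
Hypothesis HLa : lamination La.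
Hypothesis Hnoiso : no_isolated_leaves La.
Hypothesis Htwo : at_most_two_leaves_at_each_point La.

Lemma leaf_sym (x y : S1) : La x y -> La y x.
Proof. apply (proj2 (proj1 HLa)). Qed.

Lemma leaf_neq (x y : S1) : La x y -> x <> y.
Proof. apply (proj1 (proj1 HLa)). Qed.

Lemma leaves_unlinked (a b c d : S1) : La a b -> La c d -> ~ linked a b c d.
Proof. apply (proj2 (proj2 HLa)). Qed.

Lemma uncrossed_rel_of_leaf (a b : S1) : La a b -> uncrossed_rel La a b.
Proof. intros H. right. intros x y Hxy. apply leaves_unlinked; auto. Qed.

Lemma exists_nearby_leaf (x y : S1) (eps : R) : La x y -> 0 < eps ->
  exists p q, La p q /\ cdist x p < eps /\ cdist y q < eps /\ ~ (p = x /\ q = y).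
Proof.
  intros Hxy He. apply NNPP; intro H.
  apply (Hnoiso x y Hxy). split; auto. exists eps; split; auto.
  intros c d Hcd [[H1 H2]|[H1 H2]].
  - left. apply NNPP; intro Hn. apply H; exists c, d.
    repeat split; auto. intros [-> ->]; auto.
  - right. apply NNPP; intro Hn. apply H; exists d, c.
    repeat split; auto using leaf_sym. intros [-> ->]; auto.
Qed.

(* Leaves near [b y] cannot cross [a b] or [b c], so they must also end at [b]. *)
Lemma crossing_leaf_pivots (a b c y : S1) (eps : R) :
  La b y -> linked a c b y -> uncrossed La a b -> uncrossed La b c -> 0 < eps ->
  exists d, La b d /\ d <> y /\ Rabs (ccw a d - ccw a y) < eps /\ linked a c b d.
Proof.
  intros Hby Hl Hab Hbc He.
  pose proof (proj1 (linked_iff_ccw _ _ _ _) Hl) as Hr.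
  pose proof (ccw_bounds a b); pose proof (ccw_bounds a y); pose proof (ccw_bounds a c).
  assert (Hd : exists d, 0 < d /\ d <= ccw a b <= 1 - d /\ d <= ccw a y <= 1 - d /\
     2 * d <= Rabs (ccw a b - ccw a c) /\ 2 * d <= Rabs (ccw a y - ccw a c) /\ d <= eps).
  { destruct (pos_below4 (ccw a b) (1 - ccw a b) (ccw a y) (1 - ccw a y))
      as [d1 [? [? [? [? ?]]]]]; try lra.
    destruct Hr as [[[? ?] ?]|[[? ?] ?]].
    - destruct (pos_below4 d1 ((ccw a c - ccw a b)/2) ((ccw a y - ccw a c)/2) eps)
        as [d [? [? [? [? ?]]]]]; try lra.
      exists d; unfold Rabs; repeat split; try lra; destruct Rcase_abs; lra.
    - destruct (pos_below4 d1 ((ccw a b - ccw a c)/2) ((ccw a c - ccw a y)/2) eps)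
        as [d [? [? [? [? ?]]]]]; try lra.
      exists d; unfold Rabs; repeat split; try lra; destruct Rcase_abs; lra. }
  destruct Hd as [d [Hd0 [Hdb [Hdy [Hdbc [Hdyc Hde]]]]]].
  destruct (exists_nearby_leaf b y d Hby Hd0) as [p [q [Hpq [Hp [Hq Hn]]]]].
  pose proof (cdist_lt_ccw a b p d Hp Hdb) as Hp'.
  pose proof (cdist_lt_ccw a y q d Hq Hdy) as Hq'.
  assert (Hl2 : linked a c p q).
  { apply linked_iff_ccw. revert Hr Hp' Hq' Hdbc Hdyc. unfold Rabs; split_ifs; lra. }
  destruct (classic (p = b)) as [->|Hpb].
  - exists q. split; [exact Hpq | split; [| split; [| exact Hl2]]].
    + intros ->; apply Hn; auto.
    + rewrite Rabs_minus_sym; lra.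
  - exfalso.
    assert (b <> q) by (intros ->; revert Hp' Hq' Hdbc Hdyc; unfold Rabs; split_ifs; lra).
    assert (b <> a) by (intros ->; rewrite ccw_self in Hdb; lra).
    assert (b <> c) by (intros ->; rewrite Rminus_diag, Rabs_R0 in Hdbc; lra).
    destruct (linked_split_chord a b c p q Hl2) as [Hx|Hx]; auto.
    + exact (Hab p q Hpq Hx).
    + exact (Hbc p q Hpq Hx).
Qed.

(* Pivoting twice produces a third leaf at [b]. *)
Lemma no_crossing_leaf_at_pivot (a b c y : S1) :
  La b y -> linked a c b y -> uncrossed La a b -> uncrossed La b c -> False.
Proof.
  intros Hby Hl Hab Hbc.
  destruct (crossing_leaf_pivots a b c y 1 Hby Hl Hab Hbc Rlt_0_1) as [d1 [Hd1 [Hn1 [_ Hl1]]]].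
  assert (Hpos : 0 < Rabs (ccw a d1 - ccw a y)).
  { apply Rabs_pos_lt. intro E. apply Hn1, (ccw_inj a). lra. }
  destruct (crossing_leaf_pivots a b c d1 _ Hd1 Hl1 Hab Hbc Hpos) as [d2 [Hd2 [Hn2 [Hc2 _]]]].
  assert (d2 <> y) by (intros ->; rewrite Rabs_minus_sym in Hc2; lra).
  destruct (Htwo b y d1 d2 Hby Hd1 Hd2) as [E|[E|E]]; subst; auto.
Qed.

Lemma uncrossed_rel_trans (a b c : S1) :
  uncrossed_rel La a b -> uncrossed_rel La b c -> uncrossed_rel La a c.
Proof.
  intros [<-|Hab]; auto. intros [<-|Hbc]; [right; auto|].
  destruct (classic (a = b)) as [<-|Nab]; [right; auto|].
  destruct (classic (b = c)) as [<-|Nbc]; [right; auto|].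
  destruct (classic (a = c)) as [<-|Nac]; [left; auto|].
  right. intros x y Hxy Hl.
  destruct (classic (b = x)) as [<-|Nbx].
  { exact (no_crossing_leaf_at_pivot a b c y Hxy Hl Hab Hbc). }
  destruct (classic (b = y)) as [<-|Nby].
  - exact (no_crossing_leaf_at_pivot a b c x (leaf_sym _ _ Hxy) (linked_sym_r _ _ _ _ Hl) Hab Hbc).
  - destruct (linked_split_chord a b c x y Hl) as [H|H]; auto.
    + exact (Hab x y Hxy H).
    + exact (Hbc x y Hxy H).
Qed.

Lemma uncrossed_rel_equivalence : equivalence_rel (uncrossed_rel La).
Proof.
  split; [apply uncrossed_rel_refl | split; [apply uncrossed_rel_sym | apply uncrossed_rel_trans]].
Qed.

End Lamination.

Section CountableCrossing.

Variable La : S1 -> S1 -> Prop.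
Hypothesis HLa : lamination La.
Hypothesis Hnoiso : no_isolated_leaves La.
Variables a b : S1.

Record box := Box { box_lo : S1; box_hi : S1; box_rad : R }.

(* A leaf crossing [a b], with a radius keeping the two ends on their sides of [a b]. *)
Definition box_ok (s : box) : Prop :=
  La (box_lo s) (box_hi s) /\ 0 < box_rad s /\
  0 < ccw a (box_lo s) - box_rad s /\ ccw a (box_lo s) + box_rad s < ccw a b /\
  ccw a b < ccw a (box_hi s) - box_rad s /\ ccw a (box_hi s) + box_rad s < 1.

Definition box_contains (s : box) (c d : S1) : Prop :=
  Rabs (ccw a c - ccw a (box_lo s)) <= box_rad s /\
  Rabs (ccw a d - ccw a (box_hi s)) <= box_rad s.

Definition box_refines (s s' : box) : Prop :=
  box_rad s' <= box_rad s / 2 /\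
  Rabs (ccw a (box_lo s') - ccw a (box_lo s)) + box_rad s' <= box_rad s /\
  Rabs (ccw a (box_hi s') - ccw a (box_hi s)) + box_rad s' <= box_rad s.

Lemma crossed_of_ccw (x y : S1) : La x y -> 0 < ccw a x < ccw a b -> ccw a b < ccw a y ->
  crossed_leaves La a b (x, y).
Proof. intros. split; simpl; auto. apply linked_iff_ccw. left; lra. Qed.

Lemma exists_box : (exists x y, La x y /\ linked a b x y) -> exists s, box_ok s.
Proof.
  intros [x0 [y0 [H0 Hl0]]]. apply linked_iff_ccw in Hl0.
  assert (Hor : exists x y, La x y /\ 0 < ccw a x < ccw a b /\ ccw a b < ccw a y).
  { pose proof (leaf_sym La HLa _ _ H0).
    destruct Hl0 as [[? ?]|[? ?]]; [exists x0, y0 | exists y0, x0]; repeat split; auto; lra. }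
  destruct Hor as [x [y [Hxy [Hx Hy]]]]. pose proof (ccw_bounds a y).
  destruct (pos_below4 (ccw a x / 2) ((ccw a b - ccw a x) / 2) ((ccw a y - ccw a b) / 2)
              ((1 - ccw a y) / 2)) as [e [? [? [? [? ?]]]]]; try lra.
  exists (Box x y e). unfold box_ok; simpl. repeat split; auto; lra.
Qed.

(* The [n]-th crossing leaf is avoided by moving to a different leaf close to the current one,
   which exists since leaves are not isolated, and shrinking the radius. *)
Lemma box_refine_avoiding (g : S1 * S1 -> nat) (n : nat) (s : box) :
  (forall p q, crossed_leaves La a b p -> crossed_leaves La a b q -> g p = g q -> p = q) ->
  box_ok s ->
  exists s', box_ok s' /\ box_refines s s' /\
    forall c d, crossed_leaves La a b (c, d) -> g (c, d) = n -> ~ box_contains s' c d.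
Proof.
  destruct s as [x y r]. intros Hg [Hxy [Hr [H1 [H2 [H3 H4]]]]]; simpl in *.
  pose proof (ccw_bounds a b).
  assert (Hr2 : 0 < r / 2) by lra.
  destruct (exists_nearby_leaf La HLa Hnoiso x y (r/2) Hxy Hr2) as [p [q [Hpq [Hp [Hq Hn]]]]].
  assert (Hp' : Rabs (ccw a x - ccw a p) < r / 2) by (apply cdist_lt_ccw; auto; lra).
  assert (Hq' : Rabs (ccw a y - ccw a q) < r / 2) by (apply cdist_lt_ccw; auto; lra).
  assert (Cx : crossed_leaves La a b (x, y)) by (apply crossed_of_ccw; auto; lra).
  assert (Cp : crossed_leaves La a b (p, q)).
  { apply crossed_of_ccw; auto; revert Hp' Hq'; unfold Rabs; split_ifs; lra. }
  assert (Hw : exists u v, crossed_leaves La a b (u, v) /\ Rabs (ccw a u - ccw a x) < r / 2 /\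
             Rabs (ccw a v - ccw a y) < r / 2 /\ g (u, v) <> n).
  { destruct (Nat.eq_dec (g (x, y)) n) as [E|E].
    - exists p, q; rewrite (Rabs_minus_sym (ccw a p)), (Rabs_minus_sym (ccw a q)).
      split; [exact Cp | split; [exact Hp' | split; [exact Hq' |]]].
      intro E2. rewrite <- E in E2. injection (Hg _ _ Cp Cx E2) as -> ->. auto.
    - exists x, y; rewrite !Rminus_diag, Rabs_R0.
      split; [exact Cx | split; [lra | split; [lra | exact E]]]. }
  destruct Hw as [u [v [[Huv _] [Hu [Hv Hgn]]]]].
  destruct (exists_radius_avoiding (fun c d => crossed_leaves La a b (c, d) /\ g (c, d) = n)
              a u v (r / 4)) as [r' [Hr' Hav]]; try lra.
  { intros c d c' d' [C1 G1] [C2 G2]. rewrite <- G2 in G1.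
    injection (Hg _ _ C1 C2 G1) as -> ->; auto. }
  { intros [_ G]; auto. }
  exists (Box u v r'). unfold box_ok, box_refines, box_contains; simpl.
  split; [|split; [|intros c d C G; exact (Hav c d (conj C G))]].
  - revert Hu Hv; unfold Rabs; split_ifs; intros; repeat split; auto; lra.
  - revert Hu Hv; unfold Rabs; split_ifs; intros; repeat split; lra.
Qed.

Lemma nested_boxes_limit (st : nat -> box) :
  (forall n, box_ok (st n) /\ box_refines (st n) (st (S n))) ->
  exists xs ys, crossed_leaves La a b (xs, ys) /\ forall n, box_contains (st n) xs ys.
Proof.
  intros Hst.
  set (X n := ccw a (box_lo (st n))). set (Y n := ccw a (box_hi (st n))).
  set (rad n := box_rad (st n)).
  assert (Hok : forall n, 0 < X n - rad n /\ X n + rad n < ccw a b /\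
                 ccw a b < Y n - rad n /\ Y n + rad n < 1 /\ 0 < rad n /\
                 La (box_lo (st n)) (box_hi (st n))).
  { intro n. destruct (Hst n) as [[? [? [? [? [? ?]]]]] _]. unfold X, Y, rad. tauto. }
  assert (Hpos : forall n, 0 <= rad n) by (intro n; pose proof (Hok n); lra).
  assert (Hhalf : forall n, rad n <= rad 0%nat * (1/2) ^ n).
  { induction n as [|n IH]; [simpl; lra|]. destruct (Hst n) as [_ [Hh _]]. simpl.
    fold (rad n) (rad (S n)) in Hh. lra. }
  destruct (nested_balls_limit X rad Hpos) as [Xs HX].
  { intro n. apply (Hst n). }
  destruct (nested_balls_limit Y rad Hpos) as [Ys HY].
  { intro n. apply (Hst n). }
  destruct (Hok 0%nat) as [G1 [G2 [G3 [G4 _]]]].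
  pose proof (HX 0%nat) as HX0; pose proof (HY 0%nat) as HY0.
  destruct (ccw_surj a Xs) as [xs Hxs]; [revert HX0; unfold Rabs; split_ifs; lra|].
  destruct (ccw_surj a Ys) as [ys Hys]; [revert HY0; unfold Rabs; split_ifs; lra|].
  assert (Hcr : linked a b xs ys).
  { apply linked_iff_ccw. left. rewrite Hxs, Hys. revert HX0 HY0; unfold Rabs; split_ifs; lra. }
  exists xs, ys. split; [split; [|exact Hcr]|].
  - simpl. apply (closed_pairs_limit La a); [exact (proj1 (proj2 HLa)) | apply Hcr|].
    intros eps He. destruct (pow_half_lt (rad 0%nat) eps He) as [N HN].
    exists (box_lo (st N)), (box_hi (st N)). rewrite Hxs, Hys.
    pose proof (HX N); pose proof (HY N); pose proof (Hhalf N).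
    rewrite (Rabs_minus_sym _ Xs), (Rabs_minus_sym _ Ys). fold (X N) (Y N).
    split; [apply Hok | lra].
  - intro n. unfold box_contains. rewrite Hxs, Hys. split; [apply HX | apply HY].
Qed.

Lemma countable_crossing_uncrossed :
  countable_set (crossed_leaves La a b) -> uncrossed La a b.
Proof.
  intros [g Hg] x0 y0 H0 Hl0.
  destruct exists_box as [s0 Hs0]; [eauto|].
  destruct (dependent_choice_nat box_ok
              (fun n s s' => box_refines s s' /\
                 forall c d, crossed_leaves La a b (c, d) -> g (c, d) = n -> ~ box_contains s' c d)
              s0 Hs0) as [st Hst].
  { intros n s Hs. destruct (box_refine_avoiding g n s Hg Hs) as [s' [? [? ?]]]. eauto. }
  destruct (nested_boxes_limit st) as [xs [ys [Cs Hin]]].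
  { intro n. destruct (Hst n) as [? [? _]]. auto. }
  destruct (Hst (g (xs, ys))) as [_ [_ Hav]].
  exact (Hav xs ys Cs eq_refl (Hin _)).
Qed.

End CountableCrossing.

Section CoveredArc.

Variable La : S1 -> S1 -> Prop.
Hypothesis HLa : lamination La.
Variables o o' : S1.
Hypothesis Hoo' : o <> o'.
Hypothesis Hunc : uncrossed La o o'.
Hypothesis Hcover : forall u, 0 < ccw o u < ccw o o' -> exists c e, La c e /\ linked o u c e.

Lemma covered_arc_leaf_around (w : S1) : 0 < ccw o w < ccw o o' ->
  exists c e, La c e /\ 0 < ccw o c < ccw o w /\ ccw o w < ccw o e <= ccw o o'.
Proof.
  intros Hw. destruct (Hcover w Hw) as [c [e [Hce Hl]]]. apply linked_iff_ccw in Hl.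
  assert (Hor : exists c e, La c e /\ 0 < ccw o c < ccw o w /\ ccw o w < ccw o e).
  { pose proof (leaf_sym La HLa _ _ Hce).
    destruct Hl as [[? ?]|[? ?]]; [exists c, e | exists e, c]; repeat split; auto; lra. }
  destruct Hor as [c' [e' [Hce' [H1 H2]]]]. exists c', e'. repeat split; auto; try lra.
  apply Rnot_lt_le. intro Hlt. apply (Hunc c' e' Hce'), linked_iff_ccw. left. lra.
Qed.

(* The leaves separating the midpoint [u] of the arc from [o] are nested; their outermost
   limit is a leaf, which can only be [o o']. *)
Lemma leaf_of_covered_arc : La o o'.
Proof.
  assert (HB : 0 < ccw o o' < 1) by (split; [apply ccw_pos; auto | apply ccw_bounds]).
  destruct (ccw_surj o (ccw o o' / 2)) as [u Hu]; [lra|].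
  set (I t s := exists c e, La c e /\ 0 < ccw o c < ccw o u /\ ccw o u < ccw o e <= ccw o o' /\
                            t = ccw o c /\ s = ccw o e).
  destruct (nested_intervals_hull I 0 (ccw o o')) as [cs [es [Hcs0 [HesB [Hbnd Happ]]]]].
  - destruct (covered_arc_leaf_around u) as [c [e [? [[? ?] [? ?]]]]]; [lra|].
    exists (ccw o c), (ccw o e), c, e. repeat split; auto; lra.
  - intros t s [c [e [_ [? [? [-> ->]]]]]]. lra.
  - intros t1 s1 t2 s2 [c1 [e1 [L1 [? [? [-> ->]]]]]] [c2 [e2 [L2 [? [? [-> ->]]]]]] Hlt.
    apply Rnot_lt_le; intro. apply (leaves_unlinked La HLa c1 e1 c2 e2 L1 L2).
    apply (linked_of_ccw_between o); lra.
  - destruct (covered_arc_leaf_around u) as [c0 [e0 [L0 [[? ?] [? ?]]]]]; [lra|].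
    destruct (Hbnd (ccw o c0) (ccw o e0)) as [? ?]; [exists c0, e0; repeat split; auto; lra|].
    destruct (ccw_surj o cs) as [P HP]; [lra|].
    destruct (ccw_surj o es) as [Q HQ]; [lra|].
    assert (LPQ : La P Q).
    { apply (closed_pairs_limit La o); [exact (proj1 (proj2 HLa)) | intros ->; lra |].
      intros eps He. destruct (Happ eps He) as [t [s [Its [Hc Hs]]]].
      destruct (Hbnd t s Its) as [? ?]. destruct Its as [c [e [Lce [_ [_ [-> ->]]]]]].
      exists c, e. rewrite HP, HQ, Rabs_right, Rabs_left1; repeat split; auto; lra. }
    assert (Hcs : cs = 0).
    { apply NNPP; intro N.
      destruct (covered_arc_leaf_around P) as [c [e [L [[? ?] [? ?]]]]]; [lra|].
      assert (es <= ccw o e).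
      { apply Rnot_lt_le; intro. apply (leaves_unlinked La HLa P Q c e LPQ L).
        apply linked_sym_r, (linked_of_ccw_between o); lra. }
      destruct (Hbnd (ccw o c) (ccw o e)); [exists c, e; repeat split; auto; lra | lra]. }
    assert (HPo : P = o) by (apply (ccw_inj o); rewrite ccw_self; lra). subst P.
    assert (Hes : es = ccw o o').
    { apply NNPP; intro N.
      destruct (covered_arc_leaf_around Q) as [c [e [L [[? ?] [? ?]]]]]; [lra|].
      apply (leaves_unlinked La HLa o Q c e LPQ L).
      apply (linked_of_ccw_between o); rewrite ?ccw_self; lra. }
    replace o' with Q; [exact LPQ | apply (ccw_inj o); lra].
Qed.

End CoveredArc.

Section HullSides.

Variable La : S1 -> S1 -> Prop.
Hypothesis HLa : lamination La.
Hypothesis Hnoiso : no_isolated_leaves La.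
Hypothesis Htwo : at_most_two_leaves_at_each_point La.

(* A leaf near [a b] would cross [a b] itself, or one of the chords [a z], [a w], [z b], [w b],
   all of which lie in the class of [a]. *)
Lemma leaf_not_inside_class (a b z w : S1) :
  La a b -> uncrossed_rel La a z -> uncrossed_rel La a w ->
  0 < ccw a z < ccw a b -> ccw a b < ccw a w -> False.
Proof.
  intros Hab Hz Hw H1 H2.
  pose proof (ccw_bounds a w).
  destruct (pos_below4 (ccw a z / 2) ((ccw a b - ccw a z) / 2) ((ccw a w - ccw a b) / 2)
              ((1 - ccw a w) / 2)) as [d [Hd [D1 [D2 [D3 D4]]]]]; try lra.
  destruct (exists_nearby_leaf La HLa Hnoiso a b d Hab Hd) as [p [q [Hpq [Hp [Hq Hn]]]]].
  assert (Hq' : Rabs (ccw a b - ccw a q) < d) by (apply cdist_lt_ccw; auto; lra).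
  pose proof (leaves_unlinked La HLa a b p q Hab Hpq) as Hu.
  assert (Nz : a <> z) by (intros <-; rewrite ccw_self in H1; lra).
  assert (Nw : a <> w) by (intros <-; rewrite ccw_self in H2; lra).
  pose proof (uncrossed_of_rel _ _ _ Hz Nz) as Uz.
  pose proof (uncrossed_of_rel _ _ _ Hw Nw) as Uw.
  destruct (classic (p = a)) as [->|Npa].
  - assert (Nqb : ccw a q <> ccw a b) by (intro E; apply ccw_inj in E; subst; auto).
    pose proof (uncrossed_rel_of_leaf La HLa a b Hab) as Eab.
    destruct (Rlt_or_le (ccw a q) (ccw a b)).
    + assert (Ezb : uncrossed_rel La z b)
        by (apply (uncrossed_rel_trans La HLa Hnoiso Htwo z a b); auto using uncrossed_rel_sym).
      apply (uncrossed_of_rel _ _ _ Ezb) with a q; [intros ->; lra | exact Hpq |].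
      apply linked_sym_r, (linked_of_ccw_between a); rewrite ?ccw_self;
        revert Hq'; unfold Rabs; split_ifs; lra.
    + assert (Ewb : uncrossed_rel La w b)
        by (apply (uncrossed_rel_trans La HLa Hnoiso Htwo w a b); auto using uncrossed_rel_sym).
      apply (uncrossed_of_rel _ _ _ Ewb) with a q; [intros ->; lra | exact Hpq |].
      apply linked_sym_l, linked_sym_r, (linked_of_ccw_between a); rewrite ?ccw_self;
        revert Hq'; unfold Rabs; split_ifs; lra.
  - pose proof (ccw_pos a p Npa). pose proof (ccw_bounds a p).
    destruct (cdist_lt_ccw_base a p d Hp) as [Hp'|Hp'].
    + destruct (Rlt_or_le (ccw a b) (ccw a q)); [apply Hu | apply (Uz p q Hpq)];
        apply linked_iff_ccw; revert Hq'; unfold Rabs; split_ifs; lra.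
    + destruct (Rlt_or_le (ccw a q) (ccw a b)); [apply Hu | apply (Uw p q Hpq)];
        apply linked_iff_ccw; revert Hq'; unfold Rabs; split_ifs; lra.
Qed.

Lemma leaf_is_hull_side (a b : S1) : La a b ->
  (forall z, uncrossed_rel La a z -> ~ arc_in a b z) \/
  (forall z, uncrossed_rel La a z -> ~ arc_out a b z).
Proof.
  intros Hab. apply NNPP; intro N. apply not_or_and in N as [N1 N2].
  apply not_all_ex_not in N1 as [z N1]. apply not_all_ex_not in N2 as [w N2].
  apply imply_to_and in N1 as [Ez Az]. apply imply_to_and in N2 as [Ew Aw].
  apply NNPP in Az; apply NNPP in Aw.
  destruct (proj1 (linked_iff_ccw _ _ _ _) (linked_of_arcs a b z w Az Aw)) as [[Hz Hw]|[Hw Hz]].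
  - exact (leaf_not_inside_class a b z w Hab Ez Ew Hz Hw).
  - exact (leaf_not_inside_class a b w z Hab Ew Ez Hw Hz).
Qed.

Lemma hull_side_is_leaf (a b : S1) : a <> b -> uncrossed_rel La a b ->
  (forall z, uncrossed_rel La a z -> ~ arc_in a b z) \/
  (forall z, uncrossed_rel La a z -> ~ arc_out a b z) -> La a b.
Proof.
  intros N Eab Hmiss.
  assert (Fa : (forall u, 0 < ccw a u < ccw a b -> ~ uncrossed_rel La a u) -> La a b).
  { intro Hm. apply (leaf_of_covered_arc La HLa a b N (uncrossed_of_rel _ _ _ Eab N)).
    intros u Hu. exact (crossing_of_not_uncrossed_rel La a u (Hm u Hu)). }
  assert (Fb : (forall u, ccw a b < ccw a u -> ~ uncrossed_rel La a u) -> La a b).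
  { intro Hm. apply (leaf_sym La HLa).
    apply (leaf_of_covered_arc La HLa b a (not_eq_sym N)).
    - apply uncrossed_sym, (uncrossed_of_rel _ _ _ Eab N).
    - intros u Hu. apply crossing_of_not_uncrossed_rel. intro E.
      apply (Hm u (proj2 (ccw_flip a b u N) Hu)).
      exact (uncrossed_rel_trans La HLa Hnoiso Htwo a b u Eab E). }
  destruct (arcs_ccw a b N) as [[A1 A2]|[A1 A2]]; destruct Hmiss as [M|M];
    [apply Fa | apply Fb | apply Fb | apply Fa]; intros u Hu E; apply (M u E);
    [apply A1 | apply A2 | apply A1 | apply A2]; exact Hu.
Qed.

Lemma Lam_uncrossed_rel (a b : S1) : Lam (uncrossed_rel La) a b <-> La a b.
Proof.
  split.
  - intros [[N [Eab T]]|[_ [_ [_ [Eab [N Hs]]]]]]; apply hull_side_is_leaf; auto.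
    left. intros z Ez Az.
    destruct (T z Ez) as [->| ->]; [apply (arc_in_l a b) | apply (arc_in_r a b)]; auto.
  - intro Hab. pose proof (leaf_neq La HLa a b Hab) as N.
    pose proof (uncrossed_rel_of_leaf La HLa a b Hab) as Eab.
    destruct (classic (exists w, uncrossed_rel La a w /\ w <> a /\ w <> b))
      as [[w [Ew [Na Nb]]]|Hno].
    + right. split; [|split].
      * intros [_ [_ T]]. destruct (T w Ew); contradiction.
      * exists b, w. repeat split; auto.
      * split; [apply uncrossed_rel_refl | split; [exact Eab | split; [exact N |]]].
        apply leaf_is_hull_side, Hab.
    + left. split; [exact N | split; [exact Eab |]]. intros x Ex.
      destruct (classic (x = a)); auto. destruct (classic (x = b)); auto.
      exfalso; apply Hno; eauto.
Qed.

Lemma Rel_iff_uncrossed_rel (p q : S1) : Rel La p q <-> uncrossed_rel La p q.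
Proof.
  split.
  - intro HR. apply HR.
    + exact (conj (uncrossed_rel_equivalence La HLa Hnoiso Htwo) (uncrossed_rel_closed_pairs La)).
    + apply uncrossed_rel_of_leaf, HLa.
    + intros a b _ Hc. right. exact (countable_crossing_uncrossed La HLa Hnoiso a b Hc).
  - intros HE E [[Erefl _] _] _ Hc.
    destruct (classic (p = q)) as [<-|Npq]; [apply Erefl|].
    apply Hc; auto. exists (fun _ => 0%nat). intros [x y] z [Hx Hl].
    exfalso; exact (uncrossed_of_rel _ _ _ HE Npq x y Hx Hl).
Qed.

Lemma uncrossed_rel_laminar : laminar_relation (uncrossed_rel La).
Proof.
  split; [exact (uncrossed_rel_equivalence La HLa Hnoiso Htwo)|].
  split; [apply uncrossed_rel_closed_class|].
  split; [apply uncrossed_rel_closed_pairs | apply uncrossed_rel_unlinked].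
Qed.

End HullSides.

Lemma Lam_ext (L L' : S1 -> S1 -> Prop) : (forall x y, L x y <-> L' x y) ->
  forall a b, Lam L a b <-> Lam L' a b.
Proof.
  intros H. replace L' with L; [tauto|].
  do 2 (apply functional_extensionality; intro). apply propositional_extensionality, H.
Qed.

Lemma Lam_related (L : S1 -> S1 -> Prop) (p q : S1) : Lam L p q -> L p q /\ p <> q.
Proof. intros [[N [H _]]|[_ [_ [_ [H [N _]]]]]]; auto. Qed.

Lemma hull_side_extremal (nu : S1 -> Prop) (p q : S1) : hull_side nu p q ->
  (forall x, nu x -> x <> p -> ccw p q <= ccw p x) \/ (forall x, nu x -> ccw p x <= ccw p q).
Proof.
  intros [_ [_ [N H]]].
  destruct (arcs_ccw p q N) as [[A1 A2]|[A1 A2]]; destruct H as [H|H];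
    [left | right | right | left]; intros x Hx; [intros Nx | | | intros Nx];
    apply Rnot_lt_le; intro; apply (H x Hx);
    [apply A1 | apply A2 | apply A1 | apply A2]; try pose proof (ccw_pos p x Nx); lra.
Qed.

Lemma Lam_extremal (L : S1 -> S1 -> Prop) (p q q' : S1) :
  Lam L p q -> L p q' -> q' <> p -> q' <> q ->
  (forall x, L p x -> x <> p -> ccw p q <= ccw p x) \/ (forall x, L p x -> ccw p x <= ccw p q).
Proof.
  intros [[_ [_ T]]|[_ [_ Hs]]] Lq' Np Nq; [|exact (hull_side_extremal _ _ _ Hs)].
  destruct (T q' Lq'); contradiction.
Qed.

Lemma boundary_lamination_two_leaves (La : S1 -> S1 -> Prop) :
  boundary_lamination La -> at_most_two_leaves_at_each_point La.
Proof.
  intros [L [_ Hiff]] p q1 q2 q3 H1 H2 H3.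
  apply Hiff in H1, H2, H3.
  destruct (Lam_related _ _ _ H1) as [L1 P1], (Lam_related _ _ _ H2) as [L2 P2],
    (Lam_related _ _ _ H3) as [L3 P3].
  apply NNPP; intros Nn. apply not_or_and in Nn as [N12 Nn]. apply not_or_and in Nn as [N13 N23].
  destruct (Lam_extremal L p q1 q2 H1 L2 (not_eq_sym P2) (not_eq_sym N12)) as [T1|T1];
  destruct (Lam_extremal L p q2 q1 H2 L1 (not_eq_sym P1) N12) as [T2|T2];
  destruct (Lam_extremal L p q3 q1 H3 L1 (not_eq_sym P1) N13) as [T3|T3];
  [apply N12 | apply N12 | apply N13 | apply N23 | apply N23 | apply N13 | apply N12 | apply N12];
  apply (ccw_inj p), Rle_antisym; auto.
Qed.

Theorem proposition2p5 :
  (forall La : S1 -> S1 -> Prop,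
      boundary_lamination La -> at_most_two_leaves_at_each_point La) /\
  (forall La : S1 -> S1 -> Prop,
      lamination La ->
      at_most_two_leaves_at_each_point La ->
      no_isolated_leaves La ->
      (forall a b, Lam (Rel La) a b <-> La a b) /\ boundary_lamination La).
Proof.
  split; [exact boundary_lamination_two_leaves|].
  intros La HLa Htwo Hnoiso. split.
  - intros a b. rewrite (Lam_ext _ _ (Rel_iff_uncrossed_rel La HLa Hnoiso Htwo)).
    exact (Lam_uncrossed_rel La HLa Hnoiso Htwo a b).
  - exists (uncrossed_rel La). split; [exact (uncrossed_rel_laminar La HLa Hnoiso Htwo)|].
    intros a b. symmetry. exact (Lam_uncrossed_rel La HLa Hnoiso Htwo a b).
Qed.
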